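(* Let $G=\langle A\mid R\rangle$ be a finitely presented group ($A$, $R$ finite) with Dehn function $D$, and suppose $G\in\mathcal{B}_f$ for some function $f\in\mathfrak{F}$ that is not identically zero. Let $p,q\in\mathfrak{F}$ satisfy $p\preceq D\preceq q$. Then there exist constants $C,K,M,N$ such that $p(n)\le C n^2 q(Kf(Mn))$ for all $n\ge N$. In particular, if $p=q=n^d$ for some $d>2$, then $n^{(d-2)/d}\preceq f$; and if $p=q=\mathfrak{e}$, then $\mathfrak{i}\preceq f$.
   Context: The Dehn function of $G=\langle A\mid R\rangle$ is $D(n)=\max\{\mathrm{Area}(w): w\in S^*, |w|\le n, \pi(w)=e\}$, where $S=A\cup A^{-1}$ and $\mathrm{Area}(w)$ is the least $k$ such that $w=\prod_{i=1}^k v_i r_i^{\pm1}v_i^{-1}$ in the free group $F(A)$ with $r_i\in R$. $\mathfrak{i}(n)=n$ and $\mathfrak{e}(n)=\exp(n)$. Convolution: for $w_1,\dots,w_k\in\Sigma^*$, $w_1\otimes\cdots\otimes w_k$ is the string over $(\Sigma\cup\{\diamond\})^k$ obtained by padding the shorter strings with a new symbol $\diamond$ and reading them in parallel; a relation is FA-recognizable if the set of convolutions of its tuples is regular. $\pi:S^*\to G$ is the canonical evaluation map, $d_A$ the word metric of $\Gamma(G,A)$. A Cayley automatic representation of $G$ is a bijection $\psi:L\to G$ from a regular language $L\subseteq S^*$ such that for every $a\in A$ the relation $\{(\psi^{-1}(g),\psi^{-1}(ga)) : g\in G\}$ is FA-recognizable; its function is $h(n)=\max\{d_A(\pi(w),\psi(w))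 : w\in L, |w|\le n\}$. $\mathfrak{F}$ is the set of nondecreasing functions from some interval $[Q,\infty)\cap\mathbb{N}$ to the nonnegative reals; $g\preceq f$ means there exist $N\ge0$ and positive integers $K,M$ with $g(n)\le Kf(Mn)$ for all $n\ge N$. $G\in\mathcal{B}_f$ means $G$ admits a Cayley automatic representation with $h\preceq f$ (independent of the finite generating set). *)

From Stdlib Require Import Reals Relations.Relation_Operators.
From HB Require Import structures.
From mathcomp Require Import all_boot.
Set Implicit Arguments.
Unset Strict Implicit.
Unset Printing Implicit Defensive.

(* Letters of S = A ∪ A^{-1}: (a, true) is the generator a, (a, false) is a^{-1}. *)
Notation word A := (seq (A * bool)%type).

Definition linv (A : finType) (x : A * bool) : A * bool := (x.1, ~~ x.2).
Definition winv (A : finType) (w : word A) : word A := rev (map (@linv A) w).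

Inductive free_step (A : finType) : word A -> word A -> Prop :=
  | fs_intro (u v : word A) (x : A * bool) :
      free_step (u ++ x :: linv x :: v) (u ++ v).

Definition free_eq (A : finType) : word A -> word A -> Prop :=
  clos_refl_sym_trans (word A) (@free_step A).

Definition conj_rel (A : finType) (t : word A * word A * bool) : word A :=
  let: (v, r, e) := t in v ++ (if e then r else winv r) ++ winv v.

Definition area_le (A : finType) (rels : seq (word A)) (w : word A) (k : nat) : Prop :=
  exists ts : seq (word A * word A * bool),
    size ts <= k /\ (forall t, t \in ts -> t.1.2 \in rels) /\
    free_eq w (flatten (map (@conj_rel A) ts)).

Definition gtrivial (A : finType) (rels : seq (word A)) (w : word A) : Prop :=
  exists k, area_le rels w k.

Definition geq (A : finType) (rels : seq (word A)) (w v : word A) : Prop :=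
  gtrivial rels (w ++ winv v).

(* D is the Dehn function of <A | rels>:
   D(n) = max { Area(w) : |w| <= n, pi(w) = e }  (written out: D n is the
   least k bounding the area of every null-homotopic word of length <= n). *)
Definition is_dehn_function (A : finType) (rels : seq (word A)) (D : nat -> nat) : Prop :=
  forall n,
    (forall w : word A, size w <= n -> gtrivial rels w -> area_le rels w (D n)) /\
    (forall k, (forall w : word A, size w <= n -> gtrivial rels w -> area_le rels w k) ->
               D n <= k).

Definition regular (S : finType) (L : seq S -> Prop) : Prop :=
  exists (Q : finType) (q0 : Q) (d : Q -> S -> Q) (F : pred Q),
    forall w, L w <-> F (foldl d q0 w).

(* Convolution u ⊗ v; None plays the role of the padding symbol ⋄. *)
Definition conv (S : finType) (u v : seq S) : seq (option S * option S) :=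
  mkseq (fun i => (onth u i, onth v i)) (maxn (size u) (size v)).

(* A Cayley automatic representation psi : L -> G.  Group elements are
   represented by words (psi w is a word whose image in G is psi(w)). *)
Definition cayley_automatic (A : finType) (rels : seq (word A))
    (L : word A -> Prop) (psi : word A -> word A) : Prop :=
  regular L /\
  (forall w1 w2, L w1 -> L w2 -> geq rels (psi w1) (psi w2) -> w1 = w2) /\
  (forall g : word A, exists w, L w /\ geq rels (psi w) g) /\
  (forall a : A,
     regular (fun c => exists u v, L u /\ L v /\
                 geq rels (psi v) (psi u ++ [:: (a, true)]) /\ c = conv u v)).

Definition preceq (g f : nat -> R) : Prop :=
  exists N K M : nat, (0 < K)%N /\ (0 < M)%N /\
    forall n, (N <= n)%N -> Rle (g n) (Rmult (INR K) (f (M * n))).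

(* f ∈ 𝔉 with domain [Q, ∞) ∩ ℕ (values below Q are irrelevant). *)
Definition inF (Q : nat) (f : nat -> R) : Prop :=
  (forall n m, (Q <= n)%N -> (n <= m)%N -> Rle (f n) (f m)) /\
  (forall n, (Q <= n)%N -> Rle R0 (f n)).

(* G ∈ B_f: some Cayley automatic representation has h ⪯ f, where
   h(n) = max { d_A(pi(w), psi(w)) : w ∈ L, |w| <= n }  (written out:
   h(n) <= K f(Mn) iff every such w has a connecting word u, pi(w u) = psi(w),
   with |u| <= K f(Mn)). *)
Definition in_B (A : finType) (rels : seq (word A)) (f : nat -> R) : Prop :=
  exists (L : word A -> Prop) (psi : word A -> word A),
    cayley_automatic rels L psi /\
    exists N K M : nat, (0 < K)%N /\ (0 < M)%N /\
      forall n (w : word A), (N <= n)%N -> L w -> (size w <= n)%N ->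
        exists u : word A, geq rels (w ++ u) (psi w) /\
          Rle (INR (size u)) (Rmult (INR K) (f (M * n))).

From Pilot Require Import Defs.
From Stdlib Require Import Reals Lra Relations.Relation_Operators.
From mathcomp Require Import all_boot zify.
Set Implicit Arguments.
Unset Strict Implicit.
Unset Printing Implicit Defensive.

(* Right multiplication by a generator being FA-recognizable, pumping the
   automaton shows that the representatives of g and g a differ in length by
   a bounded amount and that any common prefix cut of them extends, by a
   bounded number of letters, to a related pair.  Bridging each representative
   w to the element psi(w) it stands for costs at most h(n) <= K f(M n) letters,
   so the representatives of g and g a fellow-travel at distance O(f(M n)).
   Combing a null-homotopic word of length n through the representatives of
   its prefixes then fills it with O(n^2) cells of perimeter O(f(M n)):
   D(n) <= C n^2 D(O(f(M n))).  Sandwiching D between p and q gives the bound,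
   and for D = n^d or D = exp it forces the stated lower growth of f. *)

(** * Free reduction and area *)

Section FreeGroup.
Variable A : finType.
Implicit Types (x : A * bool) (u v w : word A).

Lemma linvK x : linv (linv x) = x.
Proof. by case: x => a b; rewrite /linv /= negbK. Qed.

Lemma winv_cat u v : winv (u ++ v) = winv v ++ winv u.
Proof. by rewrite /winv map_cat rev_cat. Qed.

Lemma winvK u : winv (winv u) = u.
Proof. by rewrite /winv map_rev revK -map_comp (eq_map (@linvK)) map_id. Qed.

Lemma size_winv u : size (winv u) = size u.
Proof. by rewrite /winv size_rev size_map. Qed.

Lemma free_eq_refl u : free_eq u u. Proof. exact: rst_refl. Qed.

Lemma free_eq_sym u v : free_eq u v -> free_eq v u. Proof. exact: rst_sym. Qed.

Lemma free_eq_trans u v w : free_eq u v -> free_eq v w -> free_eq u w.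
Proof. exact: rst_trans. Qed.

Lemma free_eq_congr (y z u v : word A) :
  free_eq u v -> free_eq (y ++ u ++ z) (y ++ v ++ z).
Proof.
elim=> [_ _ [u0 v0 x] | a | a b _ IH | a b c _ IH1 _ IH2].
- apply: rst_step; rewrite -!catA.
  have -> : y ++ u0 ++ [:: x, linv x & v0 ++ z] = (y ++ u0) ++ [:: x, linv x & v0 ++ z].
    by rewrite catA.
  by rewrite (catA y u0); exact: fs_intro.
- exact: free_eq_refl.
- exact: free_eq_sym.
- exact: free_eq_trans IH2.
Qed.

Lemma free_eq_catl y u v : free_eq u v -> free_eq (y ++ u) (y ++ v).
Proof. by move=> /(free_eq_congr y [::]); rewrite !cats0. Qed.

Lemma free_eq_catr z u v : free_eq u v -> free_eq (u ++ z) (v ++ z).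
Proof. exact: (free_eq_congr [::] z). Qed.

Lemma free_eq_cat u v u' v' :
  free_eq u u' -> free_eq v v' -> free_eq (u ++ v) (u' ++ v').
Proof. by move=> h1 h2; apply: free_eq_trans (free_eq_catr _ h1) (free_eq_catl _ h2). Qed.

Lemma free_eq_winv u v : free_eq u v -> free_eq (winv u) (winv v).
Proof.
elim=> [_ _ [u0 v0 x] | a | a b _ IH | a b c _ IH1 _ IH2].
- apply: rst_step; rewrite !winv_cat /winv /= !rev_cons -!cats1 -!catA /= linvK.
  exact: fs_intro.
- exact: free_eq_refl.
- exact: free_eq_sym.
- exact: free_eq_trans IH2.
Qed.

Lemma free_eq_catV u : free_eq (u ++ winv u) [::].
Proof.
elim: u => [|x u IH] /=; first exact: free_eq_refl.
rewrite /winv /= rev_cons -cats1 -/(winv u).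
have -> : x :: u ++ winv u ++ [:: linv x] = [:: x] ++ (u ++ winv u) ++ [:: linv x].
  by rewrite catA.
apply: free_eq_trans (free_eq_congr [:: x] [:: linv x] IH) _.
exact: rst_step (@fs_intro _ [::] [::] x).
Qed.

Lemma free_eq_Vcat u : free_eq (winv u ++ u) [::].
Proof. by have := free_eq_catV (winv u); rewrite winvK. Qed.

End FreeGroup.

Section Area.
Variables (A : finType) (rels : seq (word A)).
Implicit Types (u v w a b : word A).
Local Notation area_le := (area_le rels).
Local Notation geq := (Defs.geq rels).

Lemma area_le_free_eq w w' k : free_eq w w' -> area_le w k -> area_le w' k.
Proof.
move=> h [ts [hs [hr hf]]]; exists ts; split=> //; split=> //.
exact: free_eq_trans (free_eq_sym h) hf.
Qed.

Lemma area_le_leq w k k' : k <= k' -> area_le w k -> area_le w k'.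
Proof. by move=> hk [ts [hs hr]]; exists ts; split=> //; exact: leq_trans hk. Qed.

Lemma area_le_nil k : area_le [::] k.
Proof. by exists [::]; split=> //; split=> //; exact: free_eq_refl. Qed.

Lemma area_le_cat u v k1 k2 :
  area_le u k1 -> area_le v k2 -> area_le (u ++ v) (k1 + k2).
Proof.
move=> [t1 [s1 [r1 f1]]] [t2 [s2 [r2 f2]]]; exists (t1 ++ t2); split.
  by rewrite size_cat leq_add.
split; first by move=> t; rewrite mem_cat => /orP[]; [apply: r1 | apply: r2].
by rewrite map_cat flatten_cat; exact: free_eq_cat.
Qed.

Lemma area_le_conj y w k : area_le w k -> area_le (y ++ w ++ winv y) k.
Proof.
pose conj_by (t : word A * word A * bool) := let: (v, r, e) := t in (y ++ v, r, e).
move=> [ts [hs [hr hf]]]; exists (map conj_by ts); split; first by rewrite size_map.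
split; first by move=> t /mapP [[[v r] e] ht ->]; exact: (hr _ ht).
apply: free_eq_trans (free_eq_congr y (winv y) hf) _.
elim: ts {hs hr hf} => [|[[v r] e] ts IH] /=; first exact: free_eq_catV.
rewrite winv_cat -!catA; do 4 apply: free_eq_catl.
apply: free_eq_trans (free_eq_catr _ (free_eq_sym (free_eq_Vcat y))) _.
by rewrite /= -catA; apply: free_eq_catl.
Qed.

Lemma area_le_winv w k : area_le w k -> area_le (winv w) k.
Proof.
pose flip (t : word A * word A * bool) := let: (v, r, e) := t in (v, r, ~~ e).
move=> [ts [hs [hr hf]]]; exists (rev (map flip ts)); split.
  by rewrite size_rev size_map.
split; first by move=> t; rewrite mem_rev => /mapP [[[v r] e] ht ->]; exact: (hr _ ht).
apply: free_eq_trans (free_eq_winv hf) _.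
elim: ts {hs hr hf} => [|[[v r] e] ts IH] /=; first exact: free_eq_refl.
rewrite winv_cat rev_cons -cats1 map_cat flatten_cat /= cats0.
apply: free_eq_cat => //; rewrite !winv_cat winvK -catA.
by apply: free_eq_catl; case: e; rewrite ?winvK; exact: free_eq_refl.
Qed.

Definition area_eq k a b := area_le (a ++ winv b) k.

Lemma area_eq_refl k a : area_eq k a a.
Proof. exact: area_le_free_eq (free_eq_sym (free_eq_catV a)) (area_le_nil k). Qed.

Lemma area_eq_sym k a b : area_eq k a b -> area_eq k b a.
Proof. by move=> /area_le_winv; rewrite /area_eq winv_cat winvK. Qed.

Lemma area_eq_trans k1 k2 a b c :
  area_eq k1 a b -> area_eq k2 b c -> area_eq (k1 + k2) a c.
Proof.
move=> h1 h2; apply: area_le_free_eq (area_le_cat h1 h2).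
rewrite -catA; apply: free_eq_catl; rewrite catA.
exact: free_eq_catr (free_eq_Vcat b).
Qed.

Lemma area_eq_leq k k' a b : k <= k' -> area_eq k a b -> area_eq k' a b.
Proof. exact: area_le_leq. Qed.

Lemma area_eq_catl k y a b : area_eq k a b -> area_eq k (y ++ a) (y ++ b).
Proof. by move=> /(area_le_conj y); rewrite /area_eq winv_cat -!catA. Qed.

Lemma area_eq_catr k z a b : area_eq k a b -> area_eq k (a ++ z) (b ++ z).
Proof.
apply: area_le_free_eq; rewrite winv_cat -catA.
by have := free_eq_congr a (winv b) (free_eq_sym (free_eq_catV z)); rewrite /= -catA.
Qed.

Lemma geq_sym a b : geq a b -> geq b a.
Proof. by move=> [k h]; exists k; exact: area_eq_sym. Qed.

Lemma geq_trans a b c : geq a b -> geq b c -> geq a c.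
Proof. by move=> [k h] [k' h']; exists (k + k'); exact: area_eq_trans h h'. Qed.

Lemma geq_catl y a b : geq a b -> geq (y ++ a) (y ++ b).
Proof. by move=> [k h]; exists k; exact: area_eq_catl. Qed.

Lemma geq_catr z a b : geq a b -> geq (a ++ z) (b ++ z).
Proof. by move=> [k h]; exists k; exact: area_eq_catr. Qed.

Lemma geq_free_eq a b : free_eq a b -> geq a b.
Proof.
move=> h; exists 0; apply: area_le_free_eq (area_eq_refl 0 a).
exact: free_eq_catl (free_eq_winv h).
Qed.

Lemma geq_cancell y a b : geq (y ++ a) (y ++ b) -> geq a b.
Proof.
move=> /(geq_catl (winv y)); rewrite !catA => h.
apply: geq_trans (geq_trans (geq_free_eq (free_eq_sym (free_eq_catr a (free_eq_Vcat y)))) h) _.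
exact: geq_free_eq (free_eq_catr b (free_eq_Vcat y)).
Qed.

Lemma geq_cancelr z a b : geq (a ++ z) (b ++ z) -> geq a b.
Proof.
move=> /(geq_catr (winv z)); rewrite -!catA => h.
have := free_eq_catl a (free_eq_catV z); have := free_eq_catl b (free_eq_catV z).
rewrite !cats0 => eb ea.
exact: geq_trans (geq_trans (geq_free_eq (free_eq_sym ea)) h) (geq_free_eq eb).
Qed.

End Area.

(** * Convolutions and automata *)

Section Onth.
Variable T : Type.
Implicit Type s : seq T.

Lemma onth_take s i k : onth (take i s) k = if k < i then onth s k else None.
Proof.
elim: s i k => [|x s IH] [|i] [|k] //=; rewrite ?onth0n //; first by case: ifP.
by rewrite IH.
Qed.

Lemma onth_drop s j k : onth (drop j s) k = onth s (j + k).
Proof. by elim: s j => [|x s IH] [|j] //=; rewrite onth0n. Qed.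

End Onth.

Section Convolution.
Variable S : finType.
Implicit Types u v : seq S.

Lemma size_conv u v : size (conv u v) = maxn (size u) (size v).
Proof. by rewrite size_mkseq. Qed.

Lemma onth_conv u v k :
  onth (conv u v) k =
  if k < maxn (size u) (size v) then Some (onth u k, onth v k) else None.
Proof.
case: ifP => hk; first by rewrite onthE (nth_map (None, None)) ?size_conv // nth_mkseq.
by apply: onth_default; rewrite size_conv leqNgt hk.
Qed.

Definition swap_pair (p : option S * option S) := (p.2, p.1).

Lemma conv_swap u v : conv v u = map swap_pair (conv u v).
Proof. by apply: eq_from_onth => k; rewrite onth_map !onth_conv maxnC; case: ifP. Qed.

Lemma map_fst_conv u v :
  map fst (conv u v) = map Some u ++ nseq (size v - size u) None.
Proof.
apply: eq_from_onth => k; rewrite onth_map onth_conv onth_cat size_map onth_map.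
rewrite onth_nseq; case: (ltnP k (size u)) => hku.
  rewrite ifT; last exact: leq_trans hku (leq_maxl _ _).
  by move: (onthTE u k); rewrite hku; case: (onth u k).
by rewrite onth_default //; case: ifP; case: ifP => //; lia.
Qed.

Lemma conv_fst u v : pmap id (map fst (conv u v)) = u.
Proof.
rewrite map_fst_conv pmap_cat (@map_pK _ _ id Some (fun _ => erefl)).
by elim: (size v - size u) => [|k IH]; rewrite ?cats0.
Qed.

Lemma conv_snd u v : pmap id (map snd (conv u v)) = v.
Proof. by rewrite (conv_swap v u) -map_comp; exact: conv_fst. Qed.

Lemma conv_inj u v u' v' : conv u v = conv u' v' -> u = u' /\ v = v'.
Proof.
move=> h; split; first by rewrite -(conv_fst u v) h conv_fst.
by rewrite -(conv_snd u v) h conv_snd.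
Qed.

Lemma take_conv t u v : take t (conv u v) = conv (take t u) (take t v).
Proof.
apply: eq_from_onth => k; rewrite onth_take !onth_conv !onth_take !size_take_min.
by rewrite -minn_maxr ltn_min; case: (ltnP k t) => //=; case: ifP.
Qed.

Lemma conv_prefix u v u' v' t z :
  conv u' v' = conv (take t u) (take t v) ++ z ->
  (exists2 ru, u' = take t u ++ ru & size ru <= size z) /\
  (exists2 rv, v' = take t v ++ rv & size rv <= size z).
Proof.
move=> h; split.
  exists (pmap id (map fst z)); last by rewrite size_pmap -(size_map fst z) count_size.
  by rewrite -(conv_fst u' v') h map_cat pmap_cat conv_fst.
exists (pmap id (map snd z)); last by rewrite size_pmap -(size_map snd z) count_size.
by rewrite -(conv_snd u' v') h map_cat pmap_cat conv_snd.
Qed.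

Lemma conv_cut u v i j : size u <= i -> i < j -> j <= size v ->
  take i (conv u v) ++ drop j (conv u v) = conv u (take i v ++ drop j v).
Proof.
move=> hui hij hjv.
have hsx : size (conv u v) = size v by rewrite size_conv; lia.
have hti : size (take i (conv u v)) = i by rewrite size_takel //; lia.
have htv : size (take i v) = i by rewrite size_takel //; lia.
apply: eq_from_onth => k; rewrite onth_cat hti onth_conv size_cat htv size_drop.
case: ifP => hk.
  rewrite onth_take hk onth_conv onth_cat htv hk onth_take hk.
  by case: ifP; case: ifP => //; lia.
rewrite onth_drop onth_conv onth_cat htv hk onth_drop.
rewrite (@onth_default _ k u); last lia.
rewrite (@onth_default _ (j + (k - i)) u); last lia.
by case: ifP; case: ifP => //; lia.
Qed.

End Convolution.

Section Pumping.
Variables (S Q : finType) (q0 : Q) (d : Q -> S -> Q).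
Implicit Type x : seq S.

Lemma dfa_pump x k : k + #|Q| < size x ->
  exists i j, [/\ k <= i, i < j, j <= k + #|Q| &
     foldl d q0 (take i x ++ drop j x) = foldl d q0 x].
Proof.
move=> hx.
set s := map (fun i => foldl d q0 (take i x)) (iota k (#|Q|).+1).
have : ~~ uniq s.
  apply/negP => /card_uniqP hu.
  have : #|s| <= #|Q| by apply: max_card.
  by rewrite hu size_map size_iota; lia.
move/(uniqPn q0) => [i [j [hij hj]]].
rewrite size_map size_iota in hj.
rewrite !(nth_map 0) ?size_iota ?nth_iota //; try lia.
move=> heq; exists (k + i), (k + j); split; try lia.
by rewrite foldl_cat heq -foldl_cat cat_take_drop.
Qed.

Lemma dfa_complete_short (F : pred Q) x k : F (foldl d q0 x) ->
  exists z, size z <= #|Q| /\ F (foldl d q0 (take k x ++ z)).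
Proof.
elim: {x}(size x) {-2}x (leqnn (size x)) => [|n IH] x hn hF.
  by exists (drop k x); rewrite cat_take_drop size_drop; split=> //; lia.
case: (leqP (size x) (k + #|Q|)) => hs.
  by exists (drop k x); rewrite cat_take_drop size_drop; split=> //; lia.
have [i [j [hki hij hj he]]] := dfa_pump hs.
have hsize : size (take i x ++ drop j x) <= n.
  by rewrite size_cat size_take size_drop; case: ifP; lia.
have [|z [hz hFz]] := IH _ hsize; first by rewrite he.
exists z; split=> //; move: hFz.
rewrite take_cat size_takel; last lia.
case: ifP => hk; first by rewrite take_takel //; lia.
have -> : k = i by lia.
by rewrite subnn take0 cats0.
Qed.

End Pumping.

Section RegularConvolution.
Variables (S : finType) (lang : seq (option S * option S) -> Prop).
Hypothesis lang_regular : regular lang.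

Lemma regular_swap : regular (fun y => lang (map (@swap_pair S) y)).
Proof.
case: lang_regular => Q [q0 [d [F h]]].
exists Q, q0, (fun q s => d q (swap_pair s)), F => w.
by rewrite h; elim: w (q0) => //= s w IH q; rewrite IH.
Qed.

Lemma regular_conv_shorten : exists c, forall u v,
  lang (conv u v) -> size u + c < size v -> exists2 v', size v' < size v & lang (conv u v').
Proof.
case: lang_regular => Q [q0 [d [F h]]]; exists #|Q| => u v hl hs.
have [|i [j [hi hij hj he]]] := dfa_pump q0 d (x := conv u v) (k := size u).
  by rewrite size_conv; lia.
exists (take i v ++ drop j v); first by rewrite size_cat size_drop size_takel; lia.
by rewrite -conv_cut ?h ?he -?h //; lia.
Qed.

Lemma regular_conv_complete : exists c, forall u v t, lang (conv u v) ->
  exists2 z, size z <= c & lang (conv (take t u) (take t v) ++ z).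
Proof.
case: lang_regular => Q [q0 [d [F h]]]; exists #|Q| => u v t /h hF.
have [z [hz hFz]] := dfa_complete_short t hF.
by exists z; rewrite // -take_conv h.
Qed.

End RegularConvolution.

(** * Cayley automatic representations *)

Section CayleyAutomatic.
Variables (A : finType) (rels : seq (word A)).
Local Notation geq := (Defs.geq rels).
Variables (L : word A -> Prop) (psi : word A -> word A).
Hypothesis psi_inj : forall w1 w2, L w1 -> L w2 -> geq (psi w1) (psi w2) -> w1 = w2.

Definition lang_of_mul (a : A) c := exists u v, L u /\ L v /\
  geq (psi v) (psi u ++ [:: (a, true)]) /\ c = conv u v.
Hypothesis mul_regular : forall a, regular (lang_of_mul a).

Definition right_mul a u v := [/\ L u, L v & geq (psi v) (psi u ++ [:: (a, true)])].

Definition right_mul_bounded a c := forall u v, right_mul a u v ->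
  [/\ size v <= size u + c, size u <= size v + c &
   forall t, exists ru rv,
     [/\ right_mul a (take t u ++ ru) (take t v ++ rv), size ru <= c & size rv <= c]].

Lemma right_mul_bounded_leq a c c' :
  c <= c' -> right_mul_bounded a c -> right_mul_bounded a c'.
Proof.
move=> hc h u v /h [h1 h2 h3]; split; try lia.
by move=> t; have [ru [rv [? ? ?]]] := h3 t; exists ru, rv; split=> //; lia.
Qed.

Lemma right_mul_conv a u v :
  lang_of_mul a (conv u v) <-> right_mul a u v.
Proof.
split; first by move=> [u' [v' [? [? [? /conv_inj [-> ->]]]]]].
by move=> [? ? ?]; exists u, v.
Qed.

Lemma right_mul_bounded_exists a : exists c, right_mul_bounded a c.
Proof.
have [c1 shorten] := regular_conv_shorten (mul_regular a).
have [c2 shorten_swap] := regular_conv_shorten (regular_swap (mul_regular a)).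
have [c3 complete] := regular_conv_complete (mul_regular a).
exists (c1 + c2 + c3) => u v huv; split.
- rewrite leqNgt; apply/negP => hlt.
  have huv' : lang_of_mul a (conv u v) by apply/right_mul_conv.
  have [|v' hs /right_mul_conv hv'] := shorten u v huv'.
    by apply: leq_ltn_trans hlt; rewrite leq_add2l -addnA leq_addr.
  have [_ hLv hv] := huv; have [_ hLv' hv''] := hv'.
  suff e : v' = v by rewrite e ltnn in hs.
  by apply: psi_inj => //; exact: geq_trans hv'' (geq_sym hv).
- rewrite leqNgt; apply/negP => hlt.
  have hvu : lang_of_mul a (map (@swap_pair _) (conv v u)).
    by rewrite -conv_swap; apply/right_mul_conv.
  have [|u' hs hu'] := shorten_swap v u hvu.
    by apply: leq_ltn_trans hlt; rewrite leq_add2l addnAC leq_addl.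
  move: hu'; rewrite -conv_swap => /right_mul_conv [hLu' _ hu'].
  have [hLu _ hu] := huv.
  suff e : u' = u by rewrite e ltnn in hs.
  by apply: psi_inj => //; exact: geq_cancelr (geq_trans (geq_sym hu') hu).
- move=> t; have [z hz] := complete u v t (proj2 (right_mul_conv _ _ _) huv).
  case=> u' [v' [hLu' [hLv' [hu'v' /esym /conv_prefix [[ru eu hru] [rv ev hrv]]]]]].
  have hz3 : size z <= c1 + c2 + c3 by apply: leq_trans hz (leq_addl _ _).
  exists ru, rv; rewrite -eu -ev; split=> //; exact: leq_trans hz3.
Qed.

Lemma right_mul_bounded_uniform : exists c, forall a, right_mul_bounded a c.
Proof.
suff [c h] : exists c, forall a, a \in enum A -> right_mul_bounded a c.
  by exists c => a; apply: h; rewrite mem_enum.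
elim: (enum A) => [|a s [c IH]]; first by exists 0.
have [c' h'] := right_mul_bounded_exists a.
exists (c + c') => b; rewrite inE => /orP [/eqP -> | hb].
  by apply: right_mul_bounded_leq h'; exact: leq_addl.
by apply: right_mul_bounded_leq (IH b hb); exact: leq_addr.
Qed.

End CayleyAutomatic.

(** * Combing *)

Section Combing.
Variables (A : finType) (rels : seq (word A)).
Local Notation geq := (Defs.geq rels).
Local Notation area_eq := (area_eq rels).
Variable D : nat -> nat.
Hypothesis dehnD : is_dehn_function rels D.
Variables (L : word A -> Prop) (psi : word A -> word A).
Hypothesis psi_inj : forall w1 w2, L w1 -> L w2 -> geq (psi w1) (psi w2) -> w1 = w2.
Hypothesis psi_surj : forall g : word A, exists w, L w /\ geq (psi w) g.
Variable c : nat.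
Hypothesis mul_bounded : forall a, right_mul_bounded rels L psi a c.
Variable r0 : word A.
Hypothesis r0_L : L r0.
Hypothesis r0_trivial : geq (psi r0) [::].

Lemma dehn_area_eq n a b : geq a b -> size a + size b <= n -> area_eq (D n) a b.
Proof. by move=> h hs; apply: (proj1 (dehnD n)) => //; rewrite size_cat size_winv. Qed.

Lemma right_mul_letter (x : A * bool) r r' : L r -> L r' -> geq (psi r') (psi r ++ [:: x]) ->
  right_mul rels L psi x.1 r r' \/ right_mul rels L psi x.1 r' r.
Proof.
case: x => a [] /= hL hL' hg; [by left | right; split=> //].
apply: geq_trans (geq_catr [:: (a, true)] (geq_sym hg)); apply: geq_free_eq.
have := @fs_intro _ (psi r) [::] (a, false); rewrite cats0 -catA.
by move=> h; apply: rst_sym; apply: rst_step.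
Qed.

Lemma size_right_mul_letter (x : A * bool) r r' : L r -> L r' -> geq (psi r') (psi r ++ [:: x]) ->
  size r' <= size r + c.
Proof.
by move=> hL hL' hg; case: (right_mul_letter hL hL' hg) => /mul_bounded [].
Qed.

Section FellowTravel.
Variables (T E : nat).
Hypothesis dist_bound : forall w, L w -> size w <= T + c ->
  exists e, geq (w ++ e) (psi w) /\ size e <= E.

Lemma right_mul_fellow_travel a u v : right_mul rels L psi a u v ->
  size u <= T -> size v <= T ->
  forall t, exists cc, size cc <= 2 * c + 2 * E + 1 /\ geq (take t u ++ cc) (take t v).
Proof.
move=> /mul_bounded [_ _ prefix] hu hv t.
have [ru [rv [[hLu hLv hg] hru hrv]]] := prefix t.
have [|eu [heu heus]] := dist_bound hLu; first by rewrite size_cat size_take; case: ifP; lia.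
have [|ev [hev hevs]] := dist_bound hLv; first by rewrite size_cat size_take; case: ifP; lia.
exists (ru ++ eu ++ [:: (a, true)] ++ winv ev ++ winv rv); split.
  by rewrite !size_cat !size_winv /=; lia.
have -> : take t u ++ ru ++ eu ++ [:: (a, true)] ++ winv ev ++ winv rv =
   (((take t u ++ ru) ++ eu) ++ [:: (a, true)]) ++ (winv ev ++ winv rv) by rewrite -!catA.
apply: geq_trans (geq_catr _ (geq_catr _ heu)) _.
apply: geq_trans (geq_catr _ (geq_sym hg)) _.
apply: geq_trans (geq_catr _ (geq_sym hev)) _.
apply: geq_free_eq; rewrite -!catA.
by have := free_eq_catl (take t v) (free_eq_catV (rv ++ ev)); rewrite winv_cat cats0 -!catA.
Qed.

Lemma letter_fellow_travel (x : A * bool) r r' : L r -> L r' -> geq (psi r') (psi r ++ [:: x]) ->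
  size r <= T -> size r' <= T ->
  forall t, exists cc, size cc <= 2 * c + 2 * E + 1 /\ geq (take t r ++ cc) (take t r').
Proof.
move=> hL hL' hg hr hr' t; case: (right_mul_letter hL hL' hg) => h.
  exact: right_mul_fellow_travel h hr hr' t.
have [cc [hs hc]] := right_mul_fellow_travel h hr' hr t.
exists (winv cc); split; first by rewrite size_winv.
apply: geq_sym; apply: geq_trans (geq_catr (winv cc) hc); apply: geq_free_eq.
rewrite -catA; apply: free_eq_sym.
by have := free_eq_catl (take t r') (free_eq_catV cc); rewrite cats0.
Qed.

End FellowTravel.

(* Filling the ladder between two fellow-travelling words rung by rung: each
   square [a ++ cc' = cc ++ b] has perimeter at most [2 B + 2]. *)
Lemma area_eq_ladder P B (u v : word A) : 2 * B + 2 <= P ->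
  (forall t, exists cc, size cc <= B /\ geq (take t u ++ cc) (take t v)) ->
  forall t cc, size cc <= B -> geq (take t u ++ cc) (take t v) ->
    area_eq (D P + t * D P) (take t u ++ cc) (take t v).
Proof.
move=> hP rungs; elim=> [|t IH] cc' hs hg.
  rewrite !take0 /= addn0 in hg *; apply: dehn_area_eq hg _ => /=; lia.
have [cc [hcs hcg]] := rungs t.
have IHt := IH cc hcs hcg.
have take1 (s : word A) : take t.+1 s = take t s ++ take 1 (drop t s).
  by rewrite -addn1 takeD.
rewrite !take1 in hg *.
set a := take 1 (drop t u) in hg *; set b := take 1 (drop t v) in hg *.
have hsa : size a <= 1 by rewrite size_take_min geq_minl.
have hsb : size b <= 1 by rewrite size_take_min geq_minl.
have square : geq (a ++ cc') (cc ++ b).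
  apply: (@geq_cancell _ _ (take t u)).
  rewrite catA; apply: geq_trans hg _; rewrite catA; apply: geq_catr.
  exact: geq_sym.
have h1 : area_eq (D P) (a ++ cc') (cc ++ b).
  by apply: dehn_area_eq square _; rewrite !size_cat; lia.
have := area_eq_catr b IHt; rewrite -catA => IHb.
have := area_eq_trans (area_eq_catl (take t u) h1) IHb.
by rewrite -catA; apply: area_eq_leq; rewrite mulSn; lia.
Qed.

Section Chain.
Variables (n E : nat).
Let T := size r0 + c * n.
Let P := size r0 + 4 * c + 4 * E + 4.
Hypothesis dist_bound : forall w, L w -> size w <= T + c ->
  exists e, geq (w ++ e) (psi w) /\ size e <= E.

(* Combing the prefixes of [s] by their representatives: the representative of
   [rcons s x] fellow-travels that of [s], so one letter costs a ladder of at
   most [T + 1] cells of perimeter [<= P]. *)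
Lemma area_eq_combing (s : word A) : size s <= n -> exists r e,
  [/\ L r, geq (psi r) s, size r <= size r0 + c * size s,
      geq (r ++ e) (psi r) /\ size e <= E &
      area_eq ((1 + size s * (T + 2)) * D P) s (r ++ e)].
Proof.
elim/last_ind: s => [|s x IH] hs.
  have [|e [he hes]] := dist_bound r0_L; first by rewrite /T; lia.
  exists r0, e; split=> //; first by rewrite muln0 addn0.
  rewrite mul1n; apply: area_eq_sym; apply: dehn_area_eq (geq_trans he r0_trivial) _.
  by rewrite size_cat /P /=; lia.
rewrite size_rcons in hs.
have [r [e [hL hg hsr [he hes] ha]]] := IH (ltnW hs).
have [r' [hL' hg']] := psi_surj (rcons s x).
have hg2 : geq (psi r') (psi r ++ [:: x]).
  by apply: geq_trans hg' _; rewrite -cats1; apply: geq_catr; exact: geq_sym.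
have hsr' : size r' <= size r0 + c * (size s).+1.
  by have := size_right_mul_letter hL hL' hg2; rewrite mulnS; lia.
have hrT : size r <= T by apply: leq_trans hsr _; rewrite /T leq_add2l leq_mul2l; lia.
have hr'T : size r' <= T by apply: leq_trans hsr' _; rewrite /T leq_add2l leq_mul2l; lia.
have [|e' [he' he's]] := dist_bound hL'; first by lia.
have rungs := letter_fellow_travel dist_bound hL hL' hg2 hrT hr'T.
have [cT [hcs hcg]] := rungs T.
have ladder := area_eq_ladder (P := P) (B := 2 * c + 2 * E + 1) ltac:(rewrite /P; lia) rungs hcs hcg.
rewrite !take_oversize // in hcg ladder.
exists r', e'; split=> //; first by rewrite size_rcons.
have square : geq (e ++ [:: x]) (cT ++ e').
  apply: (@geq_cancell _ _ r); rewrite catA.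
  apply: geq_trans (geq_catr _ he) _; apply: geq_trans (geq_sym hg2) _.
  apply: geq_trans (geq_sym he') _; rewrite catA; apply: geq_catr; exact: geq_sym.
have c1 : area_eq (D P) (r ++ e ++ [:: x]) (r ++ cT ++ e').
  by apply: area_eq_catl; apply: dehn_area_eq square _; rewrite !size_cat /= /P; lia.
have := area_eq_catr [:: x] ha; rewrite -catA => c0.
have := area_eq_catr e' ladder; rewrite -catA => c2.
have := area_eq_trans (area_eq_trans c0 c1) c2.
rewrite cats1 size_rcons; apply: area_eq_leq.
by move: (size s) (D P) T => s0 y t0; nia.
Qed.

Lemma area_le_combing (w : word A) : size w <= n -> gtrivial rels w ->
  area_le rels w ((2 + n * (T + 2)) * D P).
Proof.
move=> hs ht.
have [r [e [hL hg hsr [he hes] ha]]] := area_eq_combing hs.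
have er : r = r0.
  apply: psi_inj => //; apply: geq_trans hg _; apply: geq_trans (geq_sym r0_trivial).
  by rewrite /Defs.geq /= cats0.
rewrite er in he ha.
have h2 : area_eq (D P) (r0 ++ e) [::].
  by apply: dehn_area_eq (geq_trans he r0_trivial) _; rewrite size_cat /= /P; lia.
have := area_eq_trans ha h2; rewrite /area_eq cats0; apply: area_le_leq.
have : size w * (T + 2) <= n * (T + 2) by exact: leq_mul.
by move: (size w * (T + 2)) (n * (T + 2)) (D P) => x0 x1 y; nia.
Qed.

End Chain.
End Combing.

Lemma dehn_le_combing (A : finType) (rels : seq (word A)) (D : nat -> nat)
    (f : nat -> R) :
  is_dehn_function rels D -> in_B rels f ->
  exists s c K M N : nat, 0 < M /\ forall n E, N <= n ->
    Rle (INR K * f (M * n)) (INR E) ->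
    D n <= (2 + n * (s + c * n + 2)) * D (s + 4 * c + 4 * E + 4).
Proof.
move=> dehnD [L [psi [[_ [inj [surj mulreg]]] [NB [KB [MB [_ [MB_gt0 dist]]]]]]]].
have [c bounded] := right_mul_bounded_uniform inj mulreg.
have [r0 [r0_L r0_trivial]] := surj [::].
exists (size r0), c, KB, (MB * c.+1), (NB + size r0 + c).
split=> [|n E hn hE]; first by rewrite muln_gt0 MB_gt0.
apply: (proj2 (dehnD n)) => w hw ht.
apply: (area_le_combing dehnD inj surj bounded r0_L r0_trivial _ hw ht) => w' hw' hs.
have hNB : NB <= c.+1 * n by rewrite mulSn; lia.
have hsize : size w' <= c.+1 * n by rewrite mulSn; lia.
have [u [hu hus]] := dist _ _ hNB hw' hsize.
exists u; split=> //; apply/leP/INR_le.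
by apply: Rle_trans hus _; rewrite mulnA.
Qed.

(** * Growth estimates *)

Open Scope R_scope.

Lemma INR_leq m n : (m <= n)%N -> INR m <= INR n.
Proof. by move/leP; exact: le_INR. Qed.

Lemma nat_ceil x : 0 <= x -> exists m : nat, INR m - 1 < x /\ x <= INR m.
Proof.
move=> hx; have [k /Rlt_le] := INR_unbounded x.
elim: k => [|k IH] hk; first by exists 0%N; rewrite /= in hk *; lra.
case: (Rle_lt_dec x (INR k)) => h; first exact: IH.
by exists k.+1; rewrite S_INR in hk *; lra.
Qed.

Lemma nat_fit (m a b b' : nat) (x : R) : (0 < a)%N -> 0 <= x ->
  INR a * x + INR (a * b.+1 + b') <= INR m ->
  exists E : nat, [/\ x <= INR E, (b <= E)%N & (a * E + b' <= m)%N].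
Proof.
move=> a_gt0 x_ge0 hm.
have [E aE_le aE_gt] : exists2 E, (a * E <= m - b')%N & (m - b' < a * E.+1)%N.
  by exists ((m - b') %/ a); rewrite mulnC ?leq_divM ?ltn_ceil.
have ha : 0 < INR a by apply/lt_0_INR/ltP.
rewrite plus_INR !mult_INR S_INR in hm.
have hb'm : (b' <= m)%N by apply/leP/INR_le; have := pos_INR b; nra.
have /ltP/lt_INR := aE_gt; rewrite mult_INR S_INR minus_INR; last exact/leP.
move=> hmE; have hxE : x + INR b < INR E by nra.
exists E; split; first by have := pos_INR b; lra.
  by apply/leP/INR_le; lra.
by lia.
Qed.

Lemma scale_absorbs (a B K0 k0 : nat) (F : R) : 0 <= F -> 1 <= INR k0 * F ->
  INR a * (INR K0 * F) + INR B <= INR (a * K0 + B * k0).+1 * F.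
Proof.
move=> F_ge0 hF; rewrite S_INR plus_INR !mult_INR.
have := pos_INR a; have := pos_INR K0; have := pos_INR B; nra.
Qed.

(* [m] ranges over the (at most two) naturals with [m - 1 < K f(M n) <= m],
   i.e. [m] is the ceiling of [K f(M n)]. *)
Definition sq_bounded (f p q : nat -> R) := exists (C : R) (K M N : nat),
  (0 < K)%N /\ (0 < M)%N /\ forall n : nat, (N <= n)%N ->
    forall m : nat, INR m - R1 < INR K * f (M * n)%N /\ INR K * f (M * n)%N <= INR m ->
      p n <= C * INR n ^ 2 * q m.

Section PositiveGrowth.
Variables (f : nat -> R) (Qf n0 : nat).
Hypothesis f_inF : inF Qf f.
Hypothesis n0_ge : (Qf <= n0)%N.
Hypothesis f_n0_gt0 : 0 < f n0.

Lemma f_ge_f_n0 n : (n0 <= n)%N -> f n0 <= f n.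
Proof. by apply: (proj1 f_inF). Qed.

Lemma exists_inv_f_n0 : exists k0 : nat, forall n, (n0 <= n)%N -> 1 <= INR k0 * f n.
Proof.
have [k0 hk0] := INR_unbounded (/ f n0); exists k0 => n hn.
have := f_ge_f_n0 hn; have := Rinv_r _ (Rgt_not_eq _ _ f_n0_gt0).
have := Rinv_0_lt_compat _ f_n0_gt0; nra.
Qed.

Section DehnSqueeze.
Variables (D : nat -> nat) (s c K0 M0 N0 : nat).
Hypothesis M0_gt0 : (0 < M0)%N.
Hypothesis combing : forall n E, (N0 <= n)%N -> INR K0 * f (M0 * n)%N <= INR E ->
  (D n <= (2 + n * (s + c * n + 2)) * D (s + 4 * c + 4 * E + 4))%N.

Lemma dehn_squeeze (p q : nat -> R) (Qq : nat) : inF Qq q ->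
  preceq p (fun n => INR (D n)) -> preceq (fun n => INR (D n)) q -> sq_bounded f p q.
Proof.
move=> [q_mono q_ge0] [N1 [K1 [M1 [_ [M1_gt0 pD]]]]] [N2 [K2 [M2 [_ [M2_gt0 Dq]]]]].
have [k0 k0_inv] := exists_inv_f_n0.
pose b := (N2 + Qq)%N; pose b' := (M2 * (s + 4 * c + 4))%N.
pose C0 := (2 + M1 * (s + 2) + c * M1 * M1)%N.
exists (INR K1 * INR C0 * INR K2), (4 * M2 * K0 + (4 * M2 * b.+1 + b') * k0).+1,
  (M0 * M1)%N, (N0 + N1 + n0).+1.
split=> //; split=> [|n hn m [_ hm]]; first by rewrite muln_gt0 M0_gt0.
have hMn : (n <= M0 * (M1 * n))%N by rewrite mulnA leq_pmull // muln_gt0 M0_gt0.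
rewrite -(mulnA M0) in hm; set F := f (M0 * (M1 * n))%N in hm.
have hF : 1 <= INR k0 * F by apply: k0_inv; lia.
have F_ge0 : 0 <= F by apply: (proj2 f_inF); lia.
have hK0F : 0 <= INR K0 * F by apply: Rmult_le_pos => //; exact: pos_INR.
(* Choose the distance bound E >= K0 F small enough that M2 P <= m, so that
   D P <= K2 q m. *)
have hfit := Rle_trans _ _ _ (scale_absorbs _ _ _ F_ge0 hF) hm.
have [E [hE bE hmE]] := nat_fit (ltac:(lia) : (0 < 4 * M2)%N) hK0F hfit.
set P := (s + 4 * c + 4 * E + 4)%N.
have hDn : (D (M1 * n) <= C0 * (n * n) * D P)%N.
  have hN0 : (N0 <= M1 * n)%N by apply: leq_trans (leq_pmull _ M1_gt0); lia.
  apply: leq_trans (combing hN0 hE) _.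
  by rewrite leq_mul2r /C0; apply/orP; right; nia.
have hDP : INR (D P) <= INR K2 * q m.
  apply: Rle_trans (Dq P _) _; first by rewrite /P /b in bE *; lia.
  apply: Rmult_le_compat_l; first exact: pos_INR.
  by apply: q_mono; rewrite /P /b /b' in bE hmE *; nia.
apply: Rle_trans (pD n _) _; first by lia.
have := INR_leq hDn; rewrite !mult_INR => hDn'.
have hA : 0 <= INR K1 * (INR C0 * (INR n * INR n)).
  by apply: Rmult_le_pos; [|apply: Rmult_le_pos; [|apply: Rmult_le_pos]]; exact: pos_INR.
have := Rmult_le_compat_l _ _ _ hA hDP.
have := Rmult_le_compat_l _ _ _ (pos_INR K1) hDn'.
by rewrite /= Rmult_1_r; lra.
Qed.

End DehnSqueeze.

Lemma sq_bounded_ceil p q : sq_bounded f p q ->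
  exists (C : R) (K M N : nat), (0 < K)%N /\ (0 < M)%N /\ forall n, (N <= n)%N ->
    1 <= INR n /\ 0 < f (M * n)%N /\ exists m : nat,
      [/\ 0 < INR m, INR m <= INR K * f (M * n)%N & p n <= C * (INR n * INR n) * q m].
Proof.
move=> [C [K [M [N [K_gt0 [M_gt0 bound]]]]]].
have [k0 k0_inv] := exists_inv_f_n0.
exists C, (K + k0)%N, M, (N + n0).+1; split; first by rewrite addn_gt0 K_gt0.
split=> // n hn; split; first by apply: (INR_leq (m := 1)); lia.
have hMn : (n0 <= M * n)%N by apply: leq_trans (leq_pmull _ M_gt0); lia.
have F_gt0 : 0 < f (M * n)%N by apply: Rlt_le_trans (f_ge_f_n0 hMn).
have hK : 0 < INR K by apply/lt_0_INR/ltP.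
have [m [hm1 hm2]] := nat_ceil (Rmult_le_pos _ _ (pos_INR K) (Rlt_le _ _ F_gt0)).
have := k0_inv _ hMn; split=> //; exists m; split; first by nra.
  by rewrite plus_INR; lra.
by have := bound n ltac:(lia) m (conj hm1 hm2); rewrite /= Rmult_1_r.
Qed.

End PositiveGrowth.

Lemma ln_le x y : 0 < x -> x <= y -> ln x <= ln y.
Proof. by move=> hx [hxy|->]; [left; exact: ln_increasing | right]. Qed.

Lemma exp_le_exp x y : x <= y -> exp x <= exp y.
Proof. by move=> [hxy|->]; [left; exact: exp_increasing | right]. Qed.

Lemma rpower_root_bound (d C x y : R) : INR 2 < d -> 0 < x -> 0 < y ->
  Rpower x d <= C * (x * x) * Rpower y d ->
  Rpower x ((d - INR 2) / d) <= exp (ln C / d) * y.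
Proof.
rewrite /Rpower /= => hd hx hy h.
have C_gt0 : 0 < C.
  case: (Rle_lt_dec C 0) => // hC.
  have : C * (x * x) <= 0 by nra.
  have := exp_pos (d * ln x); have := exp_pos (d * ln y); nra.
have hxx : 0 < x * x by nra.
have hCxx : 0 < C * (x * x) by exact: Rmult_lt_0_compat.
have := ln_le (exp_pos _) h.
rewrite ln_exp !ln_mult ?ln_exp //; last exact: exp_pos.
move=> hl; rewrite -(exp_ln y hy) -exp_plus; apply: exp_le_exp.
apply: (Rmult_le_reg_l d); first lra.
have -> : d * ((d - (1 + 1)) / d * ln x) = d * ln x - 2 * ln x by field; lra.
have -> : d * (ln C / d + ln y) = ln C + d * ln y by field; lra.
lra.
Qed.

(* [exp (x / 2) >= (x / 6) ^ 3] beats the quadratic factor once [x >= 216 C]. *)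
Lemma exp_sq_bound (C x y : R) : 1 <= x -> 216 * C <= x ->
  exp x <= C * (x * x) * exp y -> x <= 2 * y.
Proof.
move=> hx1 hxC h; case: (Rle_lt_dec x (2 * y)) => // hy; exfalso.
have e2 : exp x = exp (x / 2) * exp (x / 2) by rewrite -exp_plus; congr exp; field.
have e6 : exp (x / 2) = exp (x / 6) * exp (x / 6) * exp (x / 6).
  by rewrite -!exp_plus; congr exp; field.
have hey : exp y < exp (x / 2) by apply: exp_increasing; lra.
have h6 := exp_ineq1_le (x / 6).
have hp2 := exp_pos (x / 2); have hp6 := exp_pos (x / 6).
have C_gt0 : 0 < C.
  case: (Rle_lt_dec C 0) => // hC.
  have : C * (x * x) <= 0 by nra.
  have := exp_pos x; have := exp_pos y; nra.
have h2 : exp (x / 2) < C * (x * x).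
  have : exp x < C * (x * x) * exp (x / 2).
    apply: Rle_lt_trans h _; apply: Rmult_lt_compat_l hey.
    by apply: Rmult_lt_0_compat => //; nra.
  by rewrite e2; nra.
have h3 : (x / 6) * (x / 6) * (x / 6) <= exp (x / 2).
  rewrite e6; have h8 : x / 6 * (x / 6) <= exp (x / 6) * exp (x / 6).
    by apply: Rmult_le_compat; lra.
  by apply: Rmult_le_compat; nra.
nra.
Qed.

Section GrowthConsequences.
Variables (f : nat -> R) (Qf n0 : nat).
Hypothesis f_inF : inF Qf f.
Hypothesis n0_ge : (Qf <= n0)%N.
Hypothesis f_n0_gt0 : 0 < f n0.

Lemma sq_bounded_rpower (d : R) : INR 2 < d ->
  sq_bounded f (fun n => Rpower (INR n) d) (fun n => Rpower (INR n) d) ->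
  preceq (fun n => Rpower (INR n) ((d - INR 2) / d)) f.
Proof.
move=> hd /(sq_bounded_ceil f_inF n0_ge f_n0_gt0) [C [K [M [N [_ [M_gt0 bound]]]]]].
have [K' hK'] := INR_unbounded (exp (ln C / d) * INR K).
exists N, K'.+1, M; split=> //; split=> // n hn.
have [hn1 [F_gt0 [m [hm0 hmK hp]]]] := bound n hn.
apply: Rle_trans (rpower_root_bound hd _ hm0 hp) _; first lra.
rewrite S_INR; have := exp_pos (ln C / d); nra.
Qed.

Lemma sq_bounded_exp :
  sq_bounded f (fun n => exp (INR n)) (fun n => exp (INR n)) -> preceq INR f.
Proof.
move=> /(sq_bounded_ceil f_inF n0_ge f_n0_gt0) [C [K [M [N [K_gt0 [M_gt0 bound]]]]]].
have [N' hN'] := INR_unbounded (216 * C).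
exists (N + N')%N, (2 * K)%N, M; split; first by rewrite muln_gt0.
split=> // n hn.
have [hn1 [F_gt0 [m [hm0 hmK hp]]]] := bound n ltac:(lia).
have hN'n : INR N' <= INR n by apply: INR_leq; lia.
apply: Rle_trans (exp_sq_bound hn1 _ hp) _; first lra.
by rewrite mult_INR /=; lra.
Qed.

End GrowthConsequences.

Lemma inF_rpower (d : R) : 0 < d -> inF 1 (fun n => Rpower (INR n) d).
Proof.
move=> hd; split=> [a b ha hab | n _]; last exact/Rlt_le/exp_pos.
apply/exp_le_exp/Rmult_le_compat_l; first exact: Rlt_le.
by apply: ln_le; [apply/lt_0_INR/ltP | exact: INR_leq].
Qed.

Lemma inF_exp : inF 0 (fun n => exp (INR n)).
Proof. by split=> [a b _ /INR_leq /exp_le_exp // | n _]; exact/Rlt_le/exp_pos. Qed.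

Close Scope R_scope.

Theorem mainTheorem2 (A : finType) (rels : seq (word A)) (D : nat -> nat)
  (hD : is_dehn_function rels D) (f : nat -> R) (Qf : nat) (hf : inF Qf f)
  (hnz : exists n, (Qf <= n)%N /\ f n <> R0) (hB : in_B rels f) :
  (forall (p q : nat -> R) (Qp Qq : nat), inF Qp p -> inF Qq q ->
     preceq p (fun n => INR (D n)) -> preceq (fun n => INR (D n)) q ->
     exists (C : R) (K M N : nat), (0 < K)%N /\ (0 < M)%N /\
       forall n : nat, (N <= n)%N ->
         forall m : nat, Rlt (Rminus (INR m) R1) (Rmult (INR K) (f (M * n))) /\ Rle (Rmult (INR K) (f (M * n))) (INR m) ->
           Rle (p n) (Rmult (Rmult C (pow (INR n) 2)) (q m))) /\
  (forall d : R, Rlt (INR 2) d ->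
     preceq (fun n => Rpower (INR n) d) (fun n => INR (D n)) ->
     preceq (fun n => INR (D n)) (fun n => Rpower (INR n) d) ->
     preceq (fun n => Rpower (INR n) (Rdiv (Rminus d (INR 2)) d)) f) /\
  (preceq (fun n => exp (INR n)) (fun n => INR (D n)) ->
   preceq (fun n => INR (D n)) (fun n => exp (INR n)) ->
   preceq (fun n => INR n) f).
Proof.
have [n0 [n0_ge f_n0_gt0]] : exists n0, (Qf <= n0)%N /\ Rlt R0 (f n0).
  case: hnz => n0 [hn0 f_n0]; exists n0; split=> //.
  by case: (Rle_lt_or_eq_dec _ _ (proj2 hf n0 hn0)) => // /esym.
have [s [c [K0 [M0 [N0 [M0_gt0 combing]]]]]] := dehn_le_combing hD hB.
have squeeze p q Qq : inF Qq q -> preceq p (fun n => INR (D n)) ->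
    preceq (fun n => INR (D n)) q -> sq_bounded f p q.
  exact: (dehn_squeeze hf n0_ge f_n0_gt0 M0_gt0 combing).
split; first by move=> p q Qp Qq _ hq hpD hDq; exact: (squeeze p q Qq hq hpD hDq).
split=> [d hd hpD hDq | hpD hDq].
  have d_gt0 : Rlt R0 d by apply: Rle_lt_trans hd; exact: pos_INR.
  apply: sq_bounded_rpower hf n0_ge f_n0_gt0 _ hd _.
  exact: squeeze (inF_rpower d_gt0) hpD hDq.
apply: sq_bounded_exp hf n0_ge f_n0_gt0 _.
exact: squeeze inF_exp hpD hDq.
Qed.
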